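(* Let $\{\mu_t\}$ be a free convolution semigroup as described in the context. Any martingale polynomial for $\{\mu_t\}$ is a (finite) linear combination, with complex coefficients, of the elements of the standard Sheffer system for $\{\mu_t\}$.
   Context: Let $\mu$ be a freely infinitely divisible probability measure on $\mathbb R$ with finite moments of all orders, and $\{\mu_t\}_{t\ge0}$ the free convolution semigroup with $\mu_0=\delta_0$, $\mu_1=\mu$, $R_{\mu_t}=tR_\mu$. Write $G_t(z)=\sum_n\langle\mu_t,x^n\rangle z^{-(n+1)}$ (Cauchy transform, formal series in $z^{-1}$), $K_t$ its compositional inverse, $K_t(z)=\frac1z+t\sum_{n\ge1}r_nz^{n-1}$ with $r_n$ the free cumulants of $\mu$, and $F_{s,t}=K_s\circ G_t$. Let $\mathrm{Res}_z(x)=\frac{1}{z-x}=\sum_{n\ge0}x^nz^{-(n+1)}$. For $s\le t$, $\mathcal K_{s,t}$ is the linear operator on $\mathbb C[x]$ determined (coefficientwise in the formal expansion in $z^{-1}$) by $\mathcal K_{s,t}(\mathrm{Res}_z)=\mathrm{Res}_{F_{s,t}(z)}$; these are the transition operators of the free Lévy process with distributions $\mu_t$, i.e. $\mathbb E_s[f(X(t))]=(\mathcal K_{s,t}f)(X(s))$. A martingale polynomial for $\{\mu_t\}$ is a function $p(x,t)$, polynomial in $x$ for each $t$, with $\mathcal K_{s,t}(p(\cdot,t))=p(\cdot,s)$ for all $s<t$. The standard Sheffer system for $\{\mu_t\}$ is the family $\{Q_n(x,t)\}_{n\ge0}$ defined by $\frac{1}{z(K_t(z)-x)}=\sum_{n\ge0}Q_n(x,t)z^n$;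 $Q_n$ is monic of degree $n$ in $x$. *)

From HB Require Import structures.
From mathcomp Require Import all_boot all_algebra.
From mathcomp Require Import all_classical all_reals all_analysis.
From mathcomp Require Import complex.
Set Implicit Arguments. Unset Strict Implicit. Unset Printing Implicit Defensive.
Import GRing.Theory Num.Theory.
Local Open Scope ring_scope.

Section FormalSeries.
Variable T : comNzRingType.

Definition ps := nat -> T.

Definition ps1 : ps := fun n => (n == 0)%:R.
Definition psX : ps := fun n => (n == 1)%:R.

Definition psmul (a b : ps) : ps := fun n => \sum_(i < n.+1) a i * b (n - i)%N.

Definition pspow (a : ps) (k : nat) : ps := iter k (psmul a) ps1.

(* composition f o g, meaningful when g 0 = 0 *)
Definition pscomp (f g : ps) : ps := fun n => \sum_(j < n.+1) f j * pspow g j n.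

(* multiplicative inverse of a series with constant term 1:
   1/a = sum_j (1 - a)^j, the coefficient of order n only involves j <= n *)
Definition psinv1 (a : ps) : ps :=
  fun n => \sum_(j < n.+1) pspow (fun k => ps1 k - a k) j n.
End FormalSeries.

Section FreeLevy.
Variable R : realType.
Local Notation C := R[i].
Local Open Scope complex_scope.

Definition moment (P : probability R R) (n : nat) : R :=
  fine (\int[P]_x (x ^+ n)%:E)%E.

Definition has_all_moments (P : probability R R) : Prop :=
  forall n : nat, P.-integrable setT (fun x => (x ^+ n)%:E).

(* Cauchy transform G(z) = sum_n m_n z^{-(n+1)}, as a formal power series
   in the variable w = z^{-1} *)
Definition Gser (m : nat -> C) : ps C :=
  fun n => if n is k.+1 then m k else 0.

(* z K(z) = 1 + sum_{n>=1} c_n z^n, where K(z) = 1/z + sum_{n>=1} c_n z^{n-1}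
   (c_0 is ignored) *)
Definition zK (c : nat -> C) : ps C := fun n => if n == 0%N then 1 else c n.

(* 1/K(u) = u / (u K(u)), a formal power series in u with zero constant term *)
Definition invK (c : nat -> C) : ps C := psmul (psX C) (psinv1 (zK c)).

(* K (with cumulant sequence c) is the compositional inverse of the Cauchy
   transform with moment sequence m:  G(K(z)) = z, i.e. in the variable
   v = 1/z :  sum_n m_n (1/K)^{n+1} = v.                                   *)
Definition is_comp_inverse (m c : nat -> C) : Prop :=
  pscomp (Gser m) (invK c) = psX C.

(* {mu_t}_{t>=0} is the free convolution semigroup with mu_0 = delta_0 and
   R_{mu_t} = t R_{mu_1}, mu_1 having free cumulants r_n; all mu_t have
   finite moments of all orders. *)
Definition free_conv_semigroup (mu : R -> probability R R) (r : nat -> R) : Prop :=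
  [/\ forall t, 0 <= t -> has_all_moments (mu t),
      mu 0 = \d_(0 : R) :> (set R -> \bar R) &
      forall t, 0 <= t ->
        is_comp_inverse (fun n => (moment (mu t) n)%:C) (fun n => (t * r n)%:C)].

(* 1 / F_{s,t}(z) where F_{s,t} = K_s o G_t : a formal power series in
   w = z^{-1} (equal to (1/K_s) o G_t) *)
Definition invF (mu : R -> probability R R) (r : nat -> R) (s t : R) : ps C :=
  pscomp (invK (fun n => (s * r n)%:C)) (Gser (fun n => (moment (mu t) n)%:C)).

(* Coefficient of w^k in Res_{F}(x) = 1/(F - x) = sum_n x^n (1/F)^{n+1},
   given phi = 1/F (a series in w with zero constant term). *)
Definition ResCoef (phi : ps C) (k : nat) : {poly C} :=
  \sum_(n < k) pspow phi n.+1 k *: 'X^n.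

(* The transition operator K_{s,t} on C[x]: determined coefficientwise by
   K_{s,t}(Res_z) = Res_{F_{s,t}(z)}; since Res_z(x) = sum_k x^k z^{-(k+1)},
   K_{s,t}(x^k) is the coefficient of z^{-(k+1)} in Res_{F_{s,t}(z)}(x). *)
Definition Kop (mu : R -> probability R R) (r : nat -> R) (s t : R)
  (p : {poly C}) : {poly C} :=
  \sum_(k < size p) p`_k *: ResCoef (invF mu r s t) k.+1.

Definition martingale_poly (mu : R -> probability R R) (r : nat -> R)
  (p : R -> {poly C}) : Prop :=
  forall s t, 0 <= s -> s < t -> Kop mu r s t (p t) = p s.

(* Standard Sheffer system: 1/(z (K_t(z) - x)) = sum_n Q_n(x,t) z^n, as a
   formal power series in z with coefficients in C[x];
   z (K_t(z) - x) = z K_t(z) - x z. *)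
Definition ShefferSer (r : nat -> R) (t : R) : ps {poly C} :=
  psinv1 (fun n => (zK (fun k => (t * r k)%:C) n)%:P - (n == 1%N)%:R *: 'X).

Definition Sheffer (r : nat -> R) (t : R) (n : nat) : {poly C} :=
  ShefferSer r t n.
End FreeLevy.

(* Since 1/(z (K_t(z) - x)) = Res_{K_t(z)}(x) / z, the Sheffer polynomial
   Q_n(., t) is the coefficient of z^(n+1) in Res_{K_t(z)}.  Substituting
   z := K_t(u) in K_{s,t}(Res_z) = Res_{K_s(G_t(z))} and using G_t o K_t = id
   gives K_{s,t}(Res_{K_t(u)}) = Res_{K_s(u)}, hence K_{s,t} Q_n(., t) = Q_n(., s).
   Each Q_n(., t) is monic of degree n, so they form a basis of C[x]; applying
   K_{0,t} to the expansion of a martingale polynomial p(., t) in this basis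
   gives the expansion of p(., 0), so its coordinates do not depend on t.
   Identities between formal power series are proved coefficientwise, on
   polynomial truncations modulo X^n. *)

From Pilot Require Import Defs.
From HB Require Import structures.
From mathcomp Require Import all_boot all_algebra.
From mathcomp Require Import all_classical all_reals all_analysis.
From mathcomp Require Import complex.
From mathcomp Require Import ring.
Set Implicit Arguments. Unset Strict Implicit. Unset Printing Implicit Defensive.
Import GRing.Theory Num.Theory.
Local Open Scope ring_scope.

Lemma sum_ord_widen (V : nmodType) m n (F : nat -> V) : (m <= n)%N ->
  (forall k, (m <= k < n)%N -> F k = 0) -> \sum_(k < n) F k = \sum_(k < m) F k.
Proof.
move=> le_mn F0; rewrite (big_ord_widen _ _ le_mn) [RHS]big_mkcond /=.
by apply: eq_bigr => k _; case: ltnP => // le_mk; rewrite F0 // le_mk /=.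
Qed.

Section PolyModX.
Variable T : comNzRingType.
Implicit Types p q : {poly T}.

Definition eqmodX n p q := forall i, (i < n)%N -> p`_i = q`_i.

Lemma eqmodX_refl n p : eqmodX n p p. Proof. by []. Qed.

Lemma eqmodX_sym n p q : eqmodX n p q -> eqmodX n q p.
Proof. by move=> epq i lt_in; rewrite epq. Qed.

Lemma eqmodX_trans n p q r : eqmodX n p q -> eqmodX n q r -> eqmodX n p r.
Proof. by move=> epq eqr i lt_in; rewrite epq ?eqr. Qed.

Lemma eqmodX_addMXn n p d : eqmodX n (p + d * 'X^n) p.
Proof. by move=> i lt_in; rewrite coefD coefMXn lt_in addr0. Qed.

Lemma eqmodXE n p q : eqmodX n p q -> p = q + drop_poly n (p - q) * 'X^n.
Proof.
move=> epq; have := poly_take_drop n (p - q).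
suff -> : take_poly n (p - q) = 0 by rewrite add0r => ->; rewrite addrC subrK.
apply/polyP => i; rewrite coef_take_poly coef0 coefB.
by case: ifP => // /epq->; rewrite subrr.
Qed.

Lemma eqmodXD n p p' q q' :
  eqmodX n p p' -> eqmodX n q q' -> eqmodX n (p + q) (p' + q').
Proof. by move=> epp eqq i lt_in; rewrite !coefD epp ?eqq. Qed.

Lemma eqmodXB n p p' q q' :
  eqmodX n p p' -> eqmodX n q q' -> eqmodX n (p - q) (p' - q').
Proof. by move=> epp eqq i lt_in; rewrite !coefB epp ?eqq. Qed.

Lemma eqmodXM n p p' q q' :
  eqmodX n p p' -> eqmodX n q q' -> eqmodX n (p * q) (p' * q').
Proof.
move=> /eqmodXE-> /eqmodXE->.
set d := drop_poly _ _; set e := drop_poly _ _.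
rewrite (_ : _ * _ = p' * q' + (d * (q' + e * 'X^n) + p' * e) * 'X^n); last by ring.
exact: eqmodX_addMXn.
Qed.

Lemma eqmodX_exp n p q k : eqmodX n p q -> eqmodX n (p ^+ k) (q ^+ k).
Proof.
by move=> epq; elim: k => [|k IHk] //; rewrite !exprS; apply: eqmodXM.
Qed.

Lemma coef0_eq0E q : q`_0 = 0 -> q = drop_poly 1 q * 'X.
Proof.
move=> q0; rewrite -[LHS](poly_take_drop 1 q) expr1.
suff -> : take_poly 1 q = 0 by rewrite add0r.
by apply/polyP => -[|i]; rewrite coef_take_poly coef0.
Qed.

Lemma coef_exp_coef0_eq0 q k i : q`_0 = 0 ->
  (q ^+ k)`_i = if (i < k)%N then 0 else (drop_poly 1 q ^+ k)`_(i - k).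
Proof. by move/coef0_eq0E => {1}->; rewrite exprMn coefMXn. Qed.

Lemma coef_exp_lt q k i : q`_0 = 0 -> (i < k)%N -> (q ^+ k)`_i = 0.
Proof. by move=> q0 lt_ik; rewrite coef_exp_coef0_eq0 // lt_ik. Qed.

Lemma coef_exp_diag q k : q`_0 = 0 -> (q ^+ k)`_k = q`_1 ^+ k.
Proof.
move=> q0; rewrite coef_exp_coef0_eq0 // ltnn subnn.
elim: k => [|k IHk]; first by rewrite coef1.
by rewrite !exprS coef0M IHk coef_drop_poly.
Qed.

Lemma eqmodX_comp n p p' q q' : q`_0 = 0 ->
  eqmodX n p p' -> eqmodX n q q' -> eqmodX n (p \Po q) (p' \Po q').
Proof.
move=> q0 /eqmodXE-> eqq; rewrite comp_polyD comp_polyM rmorphXn /= comp_polyX.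
apply: (eqmodX_trans (q := p' \Po q)).
  rewrite -[X in eqmodX _ _ X]addr0; apply: eqmodXD => // i lt_in.
  rewrite coef0 coefM big1 // => j _.
  by rewrite coef_exp_lt ?mulr0 // (leq_ltn_trans (leq_subr _ _) lt_in).
elim/poly_ind: p' => [|p' c IHp]; first by rewrite !comp_poly0.
by rewrite !comp_poly_MXaddC; apply: eqmodXD => //; apply: eqmodXM.
Qed.

Lemma eqmodX_geometric n q : q`_0 = 0 ->
  eqmodX n ((1 - q) * \sum_(j < n) q ^+ j) 1.
Proof.
move=> q0 i lt_in; rewrite -opprB mulNr -subrX1 opprB coefB.
by rewrite coef_exp_lt // subr0.
Qed.

Lemma eqmodX_inv_uniq n a s w :
  eqmodX n (a * s) 1 -> eqmodX n (a * w) 1 -> eqmodX n s w.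
Proof.
move=> as1 aw1; have sw := eqmodXM (@eqmodX_refl n s) aw1.
have asw := eqmodXM as1 (@eqmodX_refl n w).
rewrite mulr1 in sw; rewrite mul1r mulrAC mulrC in asw.
exact: eqmodX_trans (eqmodX_sym sw) asw.
Qed.

End PolyModX.

Arguments eqmodX_refl {T} n p.

Section SeriesModX.
Variable T : comNzRingType.
Implicit Types (a b f g : ps T) (p q : {poly T}).

Definition ps_eqmodX n a p := forall i, (i < n)%N -> a i = p`_i.

Lemma ps_eqmodX_poly n a : ps_eqmodX n a (\poly_(i < n) a i).
Proof. by move=> i lt_in; rewrite coef_poly lt_in. Qed.

Lemma ps_eqmodX_uniq n a p q :
  ps_eqmodX n a p -> ps_eqmodX n a q -> eqmodX n p q.
Proof. by move=> ap aq i lt_in; rewrite -ap ?aq. Qed.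

Lemma ps_eqmodX1 n : ps_eqmodX n (ps1 T) 1.
Proof. by move=> i _; rewrite coef1. Qed.

Lemma ps_eqmodXX n : ps_eqmodX n (psX T) 'X.
Proof. by move=> i _; rewrite coefX. Qed.

Lemma ps_eqmodXM n a b p q :
  ps_eqmodX n a p -> ps_eqmodX n b q -> ps_eqmodX n (psmul a b) (p * q).
Proof.
move=> ap bq i lt_in; rewrite coefM; apply: eq_bigr => j _.
have le_ji : (j <= i)%N by rewrite -ltnS.
by rewrite ap ?bq // (leq_ltn_trans _ lt_in) ?leq_subr ?(leq_ltn_trans le_ji).
Qed.

Lemma ps_eqmodX_pow n a p k : ps_eqmodX n a p -> ps_eqmodX n (pspow a k) (p ^+ k).
Proof.
move=> ap; elim: k => [|k IHk]; first exact: ps_eqmodX1.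
by rewrite exprS; apply: ps_eqmodXM.
Qed.

Lemma ps_eqmodX_comp n f g p q : g 0%N = 0 ->
  ps_eqmodX n f p -> ps_eqmodX n g q -> ps_eqmodX n (pscomp f g) (p \Po q).
Proof.
move=> g0 fp gq i lt_in.
have q0 : q`_0 = 0 by rewrite -gq ?g0 // (leq_ltn_trans _ lt_in).
have p_take : eqmodX i.+1 p (take_poly i.+1 p).
  by move=> j lt_ji; rewrite coef_take_poly lt_ji.
rewrite (eqmodX_comp q0 p_take (eqmodX_refl i.+1 q)) //.
rewrite /take_poly poly_def linear_sum coef_sum; apply: eq_bigr => j _.
have lt_jn : (j < n)%N by rewrite (leq_ltn_trans _ lt_in) // -ltnS.
by rewrite linearZ /= comp_Xn_poly coefZ fp // (ps_eqmodX_pow j gq).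
Qed.

Lemma ps_eqmodX_inv1 n a p : a 0%N = 1 -> ps_eqmodX n a p ->
  ps_eqmodX n (psinv1 a) (\sum_(j < n) (1 - p) ^+ j).
Proof.
move=> a0 ap i lt_in.
have ap_sub : ps_eqmodX n (fun k => ps1 T k - a k) (1 - p).
  by move=> k lt_kn; rewrite coefB ap // -(ps_eqmodX1 lt_kn).
have p0 : (1 - p)`_0 = 0 by rewrite -ap_sub ?a0 ?subrr // (leq_ltn_trans _ lt_in).
rewrite coef_sum (sum_ord_widen (F := fun j => ((1 - p) ^+ j)`_i) lt_in).
  by apply: eq_bigr => j _; rewrite (ps_eqmodX_pow j ap_sub).
move=> k /andP[lt_ik _].
exact: coef_exp_lt.
Qed.

Lemma psinv1_eqmodX n a p s : a 0%N = 1 ->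
  ps_eqmodX n a p -> ps_eqmodX n (psinv1 a) s -> eqmodX n (p * s) 1.
Proof.
case: n => [|n] a0 ap hs //.
have p0 : (1 - p)`_0 = 0 by rewrite coefB coef1 -ap ?a0 ?subrr.
have := eqmodX_geometric (n := n.+1) p0; rewrite subKr; apply: eqmodX_trans.
exact/eqmodXM/(ps_eqmodX_uniq hs (ps_eqmodX_inv1 a0 ap)).
Qed.

End SeriesModX.

Arguments ps_eqmodX_poly {T} n a.
Arguments ps_eqmodX1 {T} n.
Arguments ps_eqmodXX {T} n.

Section SeriesIdentities.
Variable T : comNzRingType.
Implicit Types (a b f g h : ps T).

Lemma pscomp0 f g : pscomp f g 0%N = f 0%N.
Proof. by rewrite /pscomp big_ord1 /= /ps1 /= mulr1. Qed.

Lemma pspow_coef_lt g k i : g 0%N = 0 -> (i < k)%N -> pspow g k i = 0.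
Proof.
move=> g0 lt_ik; rewrite (ps_eqmodX_pow k (ps_eqmodX_poly k g)) //.
by rewrite coef_exp_lt // coef_poly (leq_ltn_trans _ lt_ik).
Qed.

Lemma pspow_coef_diag g k : g 0%N = 0 -> pspow g k k = g 1%N ^+ k.
Proof.
move=> g0; rewrite (ps_eqmodX_pow k (ps_eqmodX_poly k.+2 g)) //.
by rewrite coef_exp_diag !coef_poly.
Qed.

Lemma pscompA f g h : g 0%N = 0 -> h 0%N = 0 ->
  pscomp (pscomp f g) h = pscomp f (pscomp g h).
Proof.
move=> g0 h0; apply: funext => i.
have gh0 : pscomp g h 0%N = 0 by rewrite pscomp0.
have hf := ps_eqmodX_poly i.+1 f; have hg := ps_eqmodX_poly i.+1 g.
have hh := ps_eqmodX_poly i.+1 h.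
rewrite (ps_eqmodX_comp h0 (ps_eqmodX_comp g0 hf hg) hh (ltnSn i)).
by rewrite (ps_eqmodX_comp gh0 hf (ps_eqmodX_comp h0 hg hh) (ltnSn i)) comp_polyA.
Qed.

Lemma pscomp_pow f h k : h 0%N = 0 -> pscomp (pspow f k) h = pspow (pscomp f h) k.
Proof.
move=> h0; apply: funext => i.
have hf := ps_eqmodX_poly i.+1 f; have hh := ps_eqmodX_poly i.+1 h.
rewrite (ps_eqmodX_comp h0 (ps_eqmodX_pow k hf) hh (ltnSn i)).
by rewrite (ps_eqmodX_pow k (ps_eqmodX_comp h0 hf hh) (ltnSn i)) rmorphXn.
Qed.

Lemma pscompX f : pscomp f (psX T) = f.
Proof.
apply: funext => i; have hf := ps_eqmodX_poly i.+1 f.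
rewrite (ps_eqmodX_comp _ hf (ps_eqmodXX i.+1) (ltnSn i)) // comp_polyXr.
by rewrite -hf.
Qed.

Lemma pspow_mulX b k i : pspow (psmul (psX T) b) k (i + k)%N = pspow b k i.
Proof.
have hb := ps_eqmodX_poly (i + k).+1 b.
rewrite (ps_eqmodX_pow k (ps_eqmodXM (ps_eqmodXX _) hb)) // exprMn coefXnM.
by rewrite ltnNge leq_addl addnK -(ps_eqmodX_pow k hb) // ltnS leq_addr.
Qed.

Lemma psinv1_subX a (y : T) n : a 0%N = 1 ->
  psinv1 (fun k => a k - y *+ (k == 1)%N) n
  = \sum_(k < n.+1) y ^+ k * pspow (psinv1 a) k.+1 (n - k)%N.
Proof.
set b := fun k => _; move=> a0.
have b0 : b 0%N = 1 by rewrite /b a0 subr0.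
have ha := ps_eqmodX_poly n.+1 a; have hia := ps_eqmodX_poly n.+1 (psinv1 a).
have hib := ps_eqmodX_poly n.+1 (psinv1 b).
set A := \poly_(_ < _) a _ in ha; set S := \poly_(_ < _) psinv1 a _ in hia.
set u := y%:P * 'X * S; set W := S * \sum_(k < n.+1) u ^+ k.
have hb : ps_eqmodX n.+1 b (A - y%:P * 'X).
  by move=> i lt_in; rewrite coefB coefCM coefX -ha // mulr_natr.
have u0 : u`_0 = 0 by rewrite /u -mulrA coefCM coefXM mulr0.
have bW : eqmodX n.+1 ((A - y%:P * 'X) * W) 1.
  rewrite /W mulrA mulrBl -/u.
  apply: eqmodX_trans (eqmodX_geometric (n := n.+1) u0).
  apply: eqmodXM => //; apply: eqmodXB => //; exact: psinv1_eqmodX ha hia.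
rewrite (hib n) // (eqmodX_inv_uniq (psinv1_eqmodX b0 hb hib) bW) //.
rewrite /W mulr_sumr coef_sum; apply: eq_bigr => k _.
have -> : S * u ^+ k = (y ^+ k)%:P * ('X^k * S ^+ k.+1).
  by rewrite rmorphXn /u !exprMn exprS; ring.
have le_kn : (k <= n)%N by rewrite -ltnS.
by rewrite coefCM coefXnM ltnNge le_kn -(ps_eqmodX_pow k.+1 hia) // ltnS leq_subr.
Qed.

End SeriesIdentities.

Section SeriesMorphism.
Variables (T T' : comNzRingType) (f : {rmorphism T -> T'}).

Lemma map_psmul a b : f \o psmul a b = psmul (f \o a) (f \o b).
Proof.
by apply: funext => n; rewrite /= rmorph_sum; apply: eq_bigr => i _; rewrite rmorphM.
Qed.

Lemma map_pspow a k : f \o pspow a k = pspow (f \o a) k.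
Proof.
elim: k => [|k IHk]; last by rewrite -[pspow a k.+1]/(psmul a _) map_psmul IHk.
by apply: funext => n; rewrite /= /ps1 rmorph_nat.
Qed.

Lemma map_psinv1 a : f \o psinv1 a = psinv1 (f \o a).
Proof.
apply: funext => n; rewrite /= rmorph_sum; apply: eq_bigr => j _.
have -> : (fun k => ps1 T' k - (f \o a) k) = f \o (fun k => ps1 T k - a k).
  by apply: funext => k; rewrite /= rmorphB /ps1 rmorph_nat.
by rewrite -map_pspow.
Qed.

End SeriesMorphism.

Section TriangularBasis.
Variables (T : nzRingType) (B : nat -> {poly T}).
Hypotheses (size_B : forall n, (size (B n) <= n.+1)%N) (coef_B : forall n, (B n)`_n = 1).

Lemma triangular_span M (q : {poly T}) : (size q <= M)%N ->
  exists c : nat -> T, q = \sum_(k < M) c k *: B k.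
Proof.
elim: M q => [|M IHM] q le_qM.
  by exists (fun=> 0); rewrite big_ord0; apply/size_poly_leq0P.
have [|c qE] := IHM (q - q`_M *: B M).
  apply/leq_sizeP => j; rewrite leq_eqVlt => /orP[/eqP<-|lt_Mj].
    by rewrite coefB coefZ coef_B mulr1 subrr.
  rewrite coefB coefZ (nth_default _ (leq_trans le_qM lt_Mj)).
  by rewrite (nth_default _ (leq_trans (size_B M) lt_Mj)) mulr0 subrr.
exists (fun k => if k == M then q`_M else c k).
rewrite big_ord_recr /= eqxx -[LHS](subrK (q`_M *: B M)) qE; congr (_ + _).
by apply: eq_bigr => k _; rewrite ltn_eqF.
Qed.

Lemma triangular_free M (c : nat -> T) :
  \sum_(k < M) c k *: B k = 0 -> forall k, (k < M)%N -> c k = 0.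
Proof.
elim: M c => [|M IHM] c //; rewrite big_ord_recr /= => sum0.
have cM : c M = 0.
  have := congr1 (fun p : {poly T} => p`_M) sum0.
  rewrite coefD coef_sum coefZ coef_B mulr1 coef0 big1 ?add0r // => i _.
  by rewrite coefZ nth_default ?mulr0 // (leq_trans (size_B i)).
move: sum0; rewrite cM scale0r addr0 => /IHM c0 k; rewrite ltnS leq_eqVlt.
by case/orP => [/eqP->|/c0].
Qed.

End TriangularBasis.

Section Resolvent.
Variable R : realType.
Local Notation C := R[i].
Local Open Scope complex_scope.
Implicit Types (phi : ps C) (p : {poly C}).

Lemma ResCoefE phi k : ResCoef phi k = \poly_(n < k) pspow phi n.+1 k.
Proof. by rewrite poly_def. Qed.

Lemma size_ResCoef phi k : (size (ResCoef phi k) <= k)%N.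
Proof. by rewrite ResCoefE size_poly. Qed.

Lemma coef_ResCoef phi k j : phi 0%N = 0 -> (ResCoef phi k)`_j = pspow phi j.+1 k.
Proof.
by move=> phi0; rewrite ResCoefE coef_poly; case: ltnP => // le_kj; rewrite pspow_coef_lt.
Qed.

Definition res_op phi p := \sum_(k < size p) p`_k *: ResCoef phi k.+1.

Lemma res_opE phi p M : (size p <= M)%N ->
  res_op phi p = \sum_(k < M) p`_k *: ResCoef phi k.+1.
Proof.
move=> le_pM; rewrite (sum_ord_widen (F := fun k => p`_k *: ResCoef phi k.+1) le_pM) //.
by move=> k /andP[le_pk _]; rewrite nth_default ?scale0r.
Qed.

Lemma res_opD phi : {morph res_op phi : p q / p + q}.
Proof.
move=> p q; rewrite !(res_opE phi (leq_maxl (size p) (size q))).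
rewrite (res_opE _ (leq_maxr (size p) (size q))) (res_opE _ (size_polyD p q)).
by rewrite -big_split; apply: eq_bigr => k _; rewrite coefD scalerDl.
Qed.

Lemma res_opZ phi a p : res_op phi (a *: p) = a *: res_op phi p.
Proof.
rewrite (res_opE _ (size_scale_leq a p)) (res_opE _ (leqnn (size p))) scaler_sumr.
by apply: eq_bigr => k _; rewrite coefZ scalerA.
Qed.

HB.instance Definition _ phi := GRing.isSemilinear.Build C {poly C} {poly C} _
  (res_op phi) (res_opZ phi, res_opD phi).

Lemma res_op_ResCoef G L Ls n : pscomp G L = psX C ->
  G 0%N = 0 -> L 0%N = 0 -> Ls 0%N = 0 ->
  res_op (pscomp Ls G) (ResCoef L n.+1) = ResCoef Ls n.+1.
Proof.
move=> GL G0 L0 Ls0; set phi := pscomp Ls G.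
have phi0 : phi 0%N = 0 by rewrite /phi pscomp0.
have phiL j : pscomp (pspow phi j) L = pspow Ls j.
  by rewrite pscomp_pow // pscompA // GL pscompX.
rewrite (res_opE _ (size_ResCoef _ _)); apply/polyP => j.
rewrite coef_sum coef_ResCoef // -phiL /pscomp [RHS]big_ord_recl.
rewrite pspow_coef_lt // mul0r add0r.
by apply: eq_bigr => k _; rewrite coefZ !coef_ResCoef // mulrC lift0.
Qed.

Lemma invK0 (c : nat -> C) : Defs.invK c 0%N = 0.
Proof. by rewrite /Defs.invK /psmul big_ord1 mul0r. Qed.

Lemma invK1 (c : nat -> C) : Defs.invK c 1%N = 1.
Proof.
rewrite /Defs.invK /psmul big_ord_recr big_ord1 /= mul0r add0r mul1r.
by rewrite subnn /psinv1 big_ord1.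
Qed.

Lemma Sheffer_ResCoef (r : nat -> R) t n :
  Sheffer r t n = ResCoef (Defs.invK (fun k => (t * r k)%:C)) n.+1.
Proof.
set c := fun k => _; rewrite /Sheffer /ShefferSer.
have -> : (fun k => (zK c k)%:P - (k == 1)%:R *: 'X)
          = (fun k => (polyC \o zK c) k - 'X *+ (k == 1)).
  by apply: funext => k; rewrite scaler_nat.
rewrite psinv1_subX // ResCoefE poly_def; apply: eq_bigr => k _.
have le_kn : (k <= n)%N by rewrite -ltnS.
rewrite -map_psinv1 -map_pspow.
have -> : pspow (Defs.invK c) k.+1 n.+1 = pspow (psinv1 (zK c)) k.+1 (n - k)%N.
  by rewrite -[RHS]pspow_mulX addnS subnK.
by rewrite mulrC mul_polyC.
Qed.

Lemma size_Sheffer (r : nat -> R) t n : (size (Sheffer r t n) <= n.+1)%N.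
Proof. by rewrite Sheffer_ResCoef size_ResCoef. Qed.

Lemma coef_Sheffer_diag (r : nat -> R) t n : (Sheffer r t n)`_n = 1.
Proof.
by rewrite Sheffer_ResCoef coef_ResCoef ?pspow_coef_diag ?invK0 // invK1 expr1n.
Qed.

Lemma KopE mu (r : nat -> R) s t : Kop mu r s t = res_op (Defs.invF mu r s t).
Proof. by []. Qed.

Lemma Kop_Sheffer mu (r : nat -> R) s t n :
  is_comp_inverse (fun k => (moment (mu t) k)%:C) (fun k => (t * r k)%:C) ->
  Kop mu r s t (Sheffer r t n) = Sheffer r s n.
Proof. by move=> Ginv; rewrite KopE !Sheffer_ResCoef res_op_ResCoef ?invK0. Qed.

End Resolvent.

Unset Implicit Arguments.

Theorem lemma2p1 (R : realType) (mu : R -> probability R R) (r : nat -> R)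
  (Hmu : free_conv_semigroup mu r)
  (p : R -> {poly R[i]}) (Hp : martingale_poly mu r p) :
  exists (N : nat) (c : nat -> R[i]),
    forall t : R, 0 <= t -> p t = \sum_(k < N) c k *: Sheffer r t k.
Proof.
case: Hmu => _ _ Ginv.
have span t := triangular_span (size_Sheffer r t) (coef_Sheffer_diag r t).
have free t := triangular_free (size_Sheffer r t) (coef_Sheffer_diag r t).
pose N := size (p 0); have [d pd] := span 0 N _ (leqnn N).
pose c k := if (k < N)%N then d k else 0.
have pc : p 0 = \sum_(k < N) c k *: Sheffer r 0 k.
  by rewrite pd; apply: eq_bigr => k _; rewrite /c ltn_ord.
have pad t K : (N <= K)%N ->
    \sum_(k < K) c k *: Sheffer r t k = \sum_(k < N) c k *: Sheffer r t k.
  move=> le_NK; apply: (sum_ord_widen (F := fun k => c k *: _)) => // k /andP[le_Nk _].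
  by rewrite /c ltnNge le_Nk scale0r.
exists N, c => t t_ge0; have [-> //|t_neq0] := eqVneq t 0.
have t_gt0 : 0 < t by rewrite lt0r t_neq0.
pose K := maxn N (size (p t)); have [e pe] := span t K _ (leq_maxr _ _).
have Kp : Kop mu r 0 t (p t) = \sum_(k < K) e k *: Sheffer r 0 k.
  rewrite pe KopE linear_sum; apply: eq_bigr => k _.
  by rewrite linearZ /= -KopE Kop_Sheffer //; apply: Ginv.
have e_eq_c k : (k < K)%N -> e k = c k.
  move=> lt_kK; apply/eqP; rewrite -subr_eq0; apply/eqP; move: k lt_kK.
  apply: (free 0); rewrite (eq_bigr _ (fun k _ => scalerBl _ _ _)) sumrB.
  by rewrite -Kp Hp // pad ?leq_maxl // -pc subrr.
by rewrite pe -(pad t K (leq_maxl _ _)); apply: eq_bigr => k _; rewrite e_eq_c.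
Qed.
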